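(* Let $\varpi$ be a minuscule fundamental weight, $\bar\phi\in W/W_{P_\varpi}$ and let $\phi\in W$ be the smallest (minimal length) element of the class $\bar\phi$. Let $\phi=s_{\gamma_1}\cdots s_{\gamma_n}$ be a reduced expression with $\gamma_k$ simple roots, set $\beta_k=i(\gamma_k)$ and $\alpha_1=\beta_1$, $\alpha_k=s_{\beta_1}\cdots s_{\beta_{k-1}}(\beta_k)$ for $k\in[2,n]$. Then for all $i,j\in[1,n]$ we have $\langle\alpha_i^\vee,\alpha_j\rangle\ge 0$.
   Context: $G$ is a semisimple algebraic group with maximal torus $T$, Borel subgroup $B\supset T$, simple roots $S$, Weyl group $W$ with longest element $w_0$. For a root $\alpha$, $s_\alpha$ is the reflection and $\alpha^\vee$ the coroot. The Weyl involution $i$ sends a simple root $\beta$ to $-w_0(\beta)$ (and a fundamental weight $\varpi$ to $-w_0(\varpi)$). A fundamental weight $\varpi$ is minuscule if $\langle\alpha^\vee,\varpi\rangle\le1$ for all positive roots $\alpha$; $P_\varpi\supseteq B$ is the associated maximal parabolic subgroup and $W_{P_\varpi}$ its Weyl group. *)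

From HB Require Import structures.
From mathcomp Require Import all_boot all_order all_algebra.
Set Implicit Arguments. Unset Strict Implicit. Unset Printing Implicit Defensive.
Import Order.TTheory GRing.Theory Num.Theory.
Local Open Scope ring_scope.

Section RootSystems.
Variables (R : realFieldType) (d : nat).
Local Notation V := 'rV[R]_d.

Definition dotp (u v : V) : R := (u *m v^T) 0 0.

Definition cpair (a v : V) : R := 2 * dotp a v / dotp a a.

Definition refl (a v : V) : V := v - cpair a v *: a.

Definition mxrows (s : seq V) : 'M[R]_(size s, d) := \matrix_(i < size s) s`_i.

Definition is_root_system (Phi : seq V) : Prop :=
  [/\ uniq Phi, 0 \notin Phi & \rank (mxrows Phi) = d] /\
  [/\ (forall a b, a \in Phi -> b \in Phi -> refl a b \in Phi),
      (forall a b, a \in Phi -> b \in Phi -> exists z : int, cpair a b = z%:~R) &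
      (forall a (c : R), a \in Phi -> c *: a \in Phi -> c = 1 \/ c = -1)].

Definition nonneg_comb (S : seq V) (v : V) : Prop :=
  exists c : 'I_(size S) -> nat, v = \sum_(i < size S) (c i)%:R *: S`_i.

Definition is_base (Phi S : seq V) : Prop :=
  [/\ uniq S, {subset S <= Phi}, row_free (mxrows S) &
      forall a, a \in Phi -> nonneg_comb S a \/ nonneg_comb S (- a)].

Definition positive_root (Phi S : seq V) (a : V) : Prop :=
  a \in Phi /\ nonneg_comb S a.

(* Weyl group elements as words in reflections: [:: a1; ..; an] acts as
   s_{a1} o ... o s_{an} *)
Definition wact (s : seq V) (v : V) : V := foldr refl v s.

Definition simple_word (S s : seq V) : bool := all (fun x => x \in S) s.

Definition same_elt (s t : seq V) : Prop := forall v, wact s v = wact t v.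

Definition reduced_word (S s : seq V) : Prop :=
  simple_word S s /\
  forall t, simple_word S t -> same_elt t s -> (size s <= size t)%N.

Definition longest_word (S w0 : seq V) : Prop :=
  reduced_word S w0 /\ forall t, reduced_word S t -> (size t <= size w0)%N.

Definition weyl_inv (w0 : seq V) (b : V) : V := - wact w0 b.

Definition fund_weight (S : seq V) (delta varpi : V) : Prop :=
  forall b, b \in S -> cpair b varpi = (b == delta)%:R.

Definition minuscule (Phi S : seq V) (varpi : V) : Prop :=
  forall a, positive_root Phi S a -> cpair a varpi <= 1.

(* words in the simple reflections generating W_{P_varpi}
   (simple roots b with <b^vee, varpi> = 0) *)
Definition parabolic_word (S : seq V) (varpi : V) (u : seq V) : bool :=
  all (fun b => (b \in S) && (cpair b varpi == 0)) u.

Definition min_coset_word (S : seq V) (varpi : V) (g : seq V) : Prop :=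
  forall u t, parabolic_word S varpi u -> simple_word S t ->
    same_elt t (g ++ u) -> (size g <= size t)%N.

(* alpha_k = s_{b_1} ... s_{b_{k-1}} (b_k), b_k = i(g_k); 0-indexed list *)
Definition alphas (w0 g : seq V) : seq V :=
  let bs := map (weyl_inv w0) g in
  mkseq (fun k => wact (take k bs) (nth 0 bs k)) (size g).

End RootSystems.

From HB Require Import structures.
From mathcomp Require Import all_boot all_order all_algebra.
From mathcomp Require Import ring lra zify.
From Stdlib Require Import Classical.
Set Implicit Arguments. Unset Strict Implicit. Unset Printing Implicit Defensive.
Import Order.TTheory GRing.Theory Num.Theory.
Local Open Scope ring_scope.

(* Writing g = s_{g_1}...s_{g_n} and eta_k = s_{g_n}...s_{g_{k+1}}(g_k), one has
   alpha_k = w0 g eta_k, so <alpha_i^vee, alpha_j> = <eta_i^vee, eta_j> because the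
   Weyl group acts by isometries.  The eta_k are positive roots, and minimality of g
   in g W_P gives <eta_k^vee, varpi> > 0: otherwise s_{eta_k} lies in the stabilizer
   W_P of varpi and g s_{eta_k}, which is g with the letter g_k deleted, would be a
   shorter element of the coset.  As varpi is minuscule, <eta_k^vee, varpi> = 1.
   Finally, if x, y are roots with (x, varpi) > 0, <y^vee, varpi> = 1 and
   <x^vee, y> < 0, then the root s_x(y) = y - <x^vee, y> x has the length of y and
   <s_x(y)^vee, varpi> > 1, which is impossible for a minuscule weight. *)

Section Euclidean.
Variables (R : realFieldType) (d : nat).
Local Notation V := 'rV[R]_d.
Implicit Types (u v w a b : V) (s t : seq V).

Lemma dotpE u v : dotp u v = \sum_k u 0 k * v 0 k.
Proof. by rewrite /dotp !mxE; apply: eq_bigr => k _; rewrite mxE. Qed.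

Lemma dotpC u v : dotp u v = dotp v u.
Proof. by rewrite !dotpE; apply: eq_bigr => k _; rewrite mulrC. Qed.

Lemma dotpDl u v w : dotp (u + v) w = dotp u w + dotp v w.
Proof. by rewrite !dotpE -big_split; apply: eq_bigr => k _; rewrite mxE mulrDl. Qed.

Lemma dotpZl (c : R) u v : dotp (c *: u) v = c * dotp u v.
Proof. by rewrite !dotpE mulr_sumr; apply: eq_bigr => k _; rewrite mxE mulrA. Qed.

Lemma dotpNl u v : dotp (- u) v = - dotp u v.
Proof. by rewrite -scaleN1r dotpZl mulN1r. Qed.

Lemma dotp0l v : dotp 0 v = 0.
Proof. by rewrite -(scale0r 0) dotpZl mul0r. Qed.

Lemma dotpBl u v w : dotp (u - v) w = dotp u w - dotp v w.
Proof. by rewrite dotpDl dotpNl. Qed.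

Lemma dotpDr u v w : dotp w (u + v) = dotp w u + dotp w v.
Proof. by rewrite !(dotpC w) dotpDl. Qed.

Lemma dotpZr (c : R) u v : dotp v (c *: u) = c * dotp v u.
Proof. by rewrite !(dotpC v) dotpZl. Qed.

Lemma dotpNr u v : dotp v (- u) = - dotp v u.
Proof. by rewrite !(dotpC v) dotpNl. Qed.

Lemma dotpBr u v w : dotp w (u - v) = dotp w u - dotp w v.
Proof. by rewrite !(dotpC w) dotpBl. Qed.

Lemma dotp_suml I (r : seq I) (P : pred I) (F : I -> V) v :
  dotp (\sum_(i <- r | P i) F i) v = \sum_(i <- r | P i) dotp (F i) v.
Proof. by apply: (big_morph (fun u => dotp u v)) => [x y|]; rewrite ?dotpDl ?dotp0l. Qed.

Lemma dotp_ge0 u : 0 <= dotp u u.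
Proof. by rewrite dotpE; apply: sumr_ge0 => k _; rewrite -expr2 sqr_ge0. Qed.

Lemma dotp_eq0 u : (dotp u u == 0) = (u == 0).
Proof.
apply/idP/idP => [|/eqP ->]; last by rewrite dotp0l.
rewrite dotpE psumr_eq0 => [/allP uk0|k _]; last by rewrite -expr2 sqr_ge0.
apply/eqP/matrixP => i k; rewrite ord1 mxE.
by move/implyP: (uk0 k (mem_index_enum _)) => /(_ isT); rewrite mulf_eq0 orbb => /eqP.
Qed.

Lemma dotp_gt0 u : u != 0 -> 0 < dotp u u.
Proof. by move=> nz; rewrite lt_def dotp_eq0 nz dotp_ge0. Qed.

Lemma dotp_cpair a v : a != 0 -> dotp a v = cpair a v * dotp a a / 2.
Proof. by move=> /dotp_gt0 /gt_eqF aa; rewrite /cpair; field; rewrite aa. Qed.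

Lemma cpairNl a v : cpair (- a) v = - cpair a v.
Proof. by rewrite /cpair dotpNl dotpNr dotpNl opprK mulrN mulNr. Qed.

Lemma cpairDr a u v : cpair a (u + v) = cpair a u + cpair a v.
Proof. by rewrite /cpair dotpDr mulrDr mulrDl. Qed.

Lemma cpairZr a (c : R) v : cpair a (c *: v) = c * cpair a v.
Proof. by rewrite /cpair dotpZr; ring. Qed.

Lemma cpairBr a u v : cpair a (u - v) = cpair a u - cpair a v.
Proof. by rewrite cpairDr -scaleN1r cpairZr mulN1r. Qed.

Lemma cpair_gt0 a v : a != 0 -> 0 < dotp a v -> 0 < cpair a v.
Proof. by move=> /dotp_gt0 aa av; rewrite /cpair divr_gt0 ?mulr_gt0. Qed.

Lemma cpair_eq0 a v : dotp a v = 0 -> cpair a v = 0.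
Proof. by rewrite /cpair => ->; rewrite mulr0 mul0r. Qed.

Lemma refl0 v : refl 0 v = v.
Proof. by rewrite /refl scaler0 subr0. Qed.

Lemma refl_fix a v : cpair a v = 0 -> refl a v = v.
Proof. by rewrite /refl => ->; rewrite scale0r subr0. Qed.

Lemma refl_self a : refl a a = - a.
Proof.
have [->|/dotp_gt0 /gt_eqF aa] := eqVneq a 0; first by rewrite refl0 oppr0.
rewrite /refl; have -> : cpair a a = 2 by rewrite /cpair; field; rewrite aa.
by rewrite scaler_nat mulr2n opprD addrA subrr add0r.
Qed.

Lemma reflD a u v : refl a (u + v) = refl a u + refl a v.
Proof. by rewrite /refl cpairDr scalerDl opprD addrACA. Qed.

Lemma reflZ a (c : R) v : refl a (c *: v) = c *: refl a v.
Proof. by rewrite /refl cpairZr scalerBr scalerA. Qed.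

Lemma reflB a u v : refl a (u - v) = refl a u - refl a v.
Proof. by rewrite reflD -scaleN1r reflZ scaleN1r. Qed.

Lemma reflK a : involutive (refl a).
Proof.
by move=> v; rewrite [X in refl a X]/refl reflB reflZ refl_self scalerN opprK /refl subrK.
Qed.

Lemma refl_dotp a u v : dotp (refl a u) (refl a v) = dotp u v.
Proof.
have [->|/dotp_gt0 /gt_eqF aa] := eqVneq a 0; first by rewrite !refl0.
rewrite /refl dotpBl !dotpBr !dotpZl !dotpZr /cpair (dotpC u a).
by field; rewrite aa.
Qed.

Lemma reflNl a v : refl (- a) v = refl a v.
Proof. by rewrite /refl cpairNl scalerN scaleNr opprK. Qed.

Lemma wact_cat s t v : wact (s ++ t) v = wact s (wact t v).
Proof. by rewrite /wact foldr_cat. Qed.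

Lemma wactD s u v : wact s (u + v) = wact s u + wact s v.
Proof. by elim: s => //= a s ->; rewrite reflD. Qed.

Lemma wactZ s (c : R) v : wact s (c *: v) = c *: wact s v.
Proof. by elim: s => //= a s ->; rewrite reflZ. Qed.

Lemma wactN s v : wact s (- v) = - wact s v.
Proof. by rewrite -scaleN1r wactZ scaleN1r. Qed.

Lemma wactB s u v : wact s (u - v) = wact s u - wact s v.
Proof. by rewrite wactD wactN. Qed.

Lemma wact_dotp s u v : dotp (wact s u) (wact s v) = dotp u v.
Proof. by elim: s => //= a s IH; rewrite refl_dotp. Qed.

Lemma wact_cpair s u v : cpair (wact s u) (wact s v) = cpair u v.
Proof. by rewrite /cpair !wact_dotp. Qed.

Lemma wact_revK s v : wact (rev s) (wact s v) = v.
Proof. by elim: s v => //= a s IH v; rewrite rev_cons -cats1 wact_cat /= reflK IH. Qed.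

Lemma wactK_rev s v : wact s (wact (rev s) v) = v.
Proof. by rewrite -{1}(revK s) wact_revK. Qed.

Lemma refl_wact s a v : refl (wact s a) v = wact s (refl a (wact (rev s) v)).
Proof. by rewrite {2}/refl wactB wactZ wactK_rev -(wact_cpair s a) wactK_rev. Qed.

Lemma wact_cancel_pair a q1 b q2 v : wact (rev q1) a = b ->
  wact (a :: q1 ++ b :: q2) v = wact q1 (wact q2 v).
Proof. by move=> <-; rewrite /= wact_cat /= refl_wact revK wactK_rev reflK. Qed.

Lemma wact_map_weyl_inv (w0 : seq V) t v :
  wact (map (weyl_inv w0) t) v = wact w0 (wact t (wact (rev w0) v)).
Proof.
elim: t v => [|b t IH] v /=; first by rewrite wactK_rev.
by rewrite IH /weyl_inv reflNl refl_wact wact_revK.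
Qed.

Lemma nth_alphas (w0 g : seq V) k : (k < size g)%N ->
  (alphas w0 g)`_k = wact (w0 ++ g) (wact (rev (drop k.+1 g)) g`_k).
Proof.
move=> kg; rewrite /alphas nth_mkseq // (nth_map 0) // -map_take.
rewrite wact_map_weyl_inv /weyl_inv wactN wact_revK !wact_cat; congr (wact w0 _).
set e := wact _ g`_k; rewrite -[in RHS](cat_take_drop k g) (drop_nth 0 kg).
by rewrite wact_cat /= /e wactK_rev refl_self wactN.
Qed.

Section RootSystem.
Variables (Phi S : seq V).
Hypotheses (Phi_root_system : is_root_system Phi) (S_base : is_base Phi S).

Lemma base_sub b : b \in S -> b \in Phi.
Proof. by case: S_base => _ + _ _; apply. Qed.

Lemma root_neq0 a : a \in Phi -> a != 0.
Proof. by case: Phi_root_system => [[_ Phi0 _] _] aPhi; apply: contraNneq Phi0 => <-. Qed.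

Lemma refl_root a b : a \in Phi -> b \in Phi -> refl a b \in Phi.
Proof. by case: Phi_root_system => _ [+ _ _]; apply. Qed.

Lemma wact_root s a : simple_word S s -> a \in Phi -> wact s a \in Phi.
Proof.
elim: s => //= b s IH /andP[bS sS] aPhi.
by apply: refl_root; [exact: base_sub | exact: IH].
Qed.

Lemma base_lin_indep (x : 'I_(size S) -> R) :
  \sum_(i < size S) x i *: S`_i = 0 -> forall i, x i = 0.
Proof.
move=> x0 i; case: S_base => _ _ Sfree _.
have e : (\row_j x j) *m mxrows S = 0 *m mxrows S.
  by rewrite mul0mx -x0 mulmx_sum_row; apply: eq_bigr => j _; rewrite mxE rowK.
by have /matrixP/(_ 0 i) := row_free_inj Sfree e; rewrite !mxE.
Qed.

Lemma sum_delta_base (i0 : 'I_(size S)) :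
  \sum_(i < size S) (i == i0)%:R *: S`_i = S`_i0.
Proof.
rewrite (bigD1 i0) //= eqxx scale1r big1 ?addr0 // => j /negbTE ->.
by rewrite scale0r.
Qed.

Lemma base_nonneg b : b \in S -> nonneg_comb S b.
Proof.
move=> bS; exists (fun i => nat_of_bool (i == Ordinal (etrans (index_mem b S) bS))).
by rewrite sum_delta_base /= nth_index.
Qed.

Lemma refl_base_nonneg b r : b \in S -> r \in Phi -> nonneg_comb S r ->
  nonneg_comb S (refl b r) \/ r = b.
Proof.
move=> bS rPhi [c er].
case: S_base => _ _ _ /(_ _ (refl_root (base_sub bS) rPhi)) [|[c' e']]; first by left.
right; set m := cpair b r; pose i0 := Ordinal (etrans (index_mem b S) bS).
have Si0 : S`_i0 = b by rewrite nth_index.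
have coef0 : forall i, (c i + c' i)%:R - m * (i == i0)%:R = 0 :> R.
  apply: base_lin_indep.
  under eq_bigr do rewrite scalerBl natrD scalerDl -scalerA.
  rewrite sumrB big_split /= -er -e' -scaler_sumr sum_delta_base Si0.
  by rewrite /refl -/m opprB addrCA subrr addr0 subrr.
have c0 : forall i, i != i0 -> c i = 0%N.
  move=> i /negbTE ii0; move/eqP: (coef0 i); rewrite ii0 mulr0 subr0.
  by rewrite pnatr_eq0 addn_eq0 => /andP[/eqP].
have rb : r = (c i0)%:R *: b.
  rewrite er (bigD1 i0) //= Si0 big1 ?addr0 // => i /c0 ->.
  by rewrite scale0r.
case: Phi_root_system => _ [_ _ /(_ b (c i0)%:R (base_sub bS))].
rewrite -rb => /(_ rPhi) [c1|cN1]; first by rewrite rb c1 scale1r.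
by move: (ler0n R (c i0)); rewrite cN1 oppr_ge0 ler10.
Qed.

Lemma inversion_root_nonneg_or_cancel a q : a \in S -> simple_word S q ->
  nonneg_comb S (wact (rev q) a) \/
  exists q1 b q2, q = q1 ++ b :: q2 /\ wact (rev q1) a = b.
Proof.
move=> aS; elim/last_ind: q => [|q b IH]; first by left; exact: base_nonneg.
rewrite /simple_word all_rcons => /andP[bS Sq].
case: (IH Sq) => [qa|[q1 [b' [q2 [-> e]]]]].
  have qaPhi : wact (rev q) a \in Phi.
    by apply: wact_root; [rewrite /simple_word all_rev | exact: base_sub].
  rewrite rev_rcons /=.
  case: (refl_base_nonneg bS qaPhi qa) => [|e]; first by left.
  by right; exists q, b, [::]; rewrite cats1.
by right; exists q1, b', (rcons q2 b); rewrite rcons_cat.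
Qed.

Lemma reduced_inversion_root_nonneg g p a q : reduced_word S g ->
  g = p ++ a :: q -> nonneg_comb S (wact (rev q) a).
Proof.
case=> Sg gmin gE; move: (Sg); rewrite gE /simple_word all_cat /= => /and3P[Sp aS Sq].
case: (inversion_root_nonneg_or_cancel aS Sq) => // [[q1 [b [q2 [qE qab]]]]].
have : (size g <= size (p ++ q1 ++ q2))%N.
  apply: gmin.
    by move: Sq; rewrite qE /simple_word !all_cat /= Sp => /and3P[-> _ ->].
  by move=> v; rewrite gE qE !wact_cat wact_cancel_pair.
by rewrite gE qE !size_cat /= size_cat /=; lia.
Qed.

Lemma reduced_or_shorter (w : seq V) : simple_word S w ->
  reduced_word S w \/
  exists2 t, simple_word S t & same_elt t w /\ (size t < size w)%N.
Proof.
move=> Sw; apply: NNPP => /not_or_and [nred nshort]; apply: nred; split => // t St tw.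
by rewrite leqNgt; apply/negP => tw_lt; apply: nshort; exists t.
Qed.

Section DominantWeight.
Variable varpi : V.
Hypotheses (varpi_dominant : forall b, b \in S -> 0 <= cpair b varpi)
  (varpi_integral : forall b, b \in S -> exists z : int, cpair b varpi = z%:~R).

Lemma base_dotp_ge0 b : b \in S -> 0 <= dotp b varpi.
Proof.
move=> bS; rewrite dotp_cpair ?root_neq0 ?base_sub //.
by rewrite divr_ge0 ?ler0n // mulr_ge0 ?dotp_ge0 ?varpi_dominant.
Qed.

Lemma nonneg_comb_dotp_ge0 v : nonneg_comb S v -> 0 <= dotp v varpi.
Proof.
case=> c ->; rewrite dotp_suml; apply: sumr_ge0 => i _.
by rewrite dotpZl mulr_ge0 ?ler0n ?base_dotp_ge0 ?mem_nth.
Qed.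

Lemma stabilizer_parabolic n (w : seq V) : (size w <= n)%N -> simple_word S w ->
  wact w varpi = varpi -> exists2 u, parabolic_word S varpi u & same_elt w u.
Proof.
elim: n w => [|n IH] w; first by rewrite leqn0 size_eq0 => /eqP -> _ _; exists [::].
move=> wn Sw wfix; case: (reduced_or_shorter Sw) => [wred|[t St [tw tw_lt]]]; last first.
  have [|u Pu tu] := IH t _ St (etrans (tw _) wfix); first lia.
  by exists u => // v; rewrite -tw tu.
case: w wn Sw wfix wred => [|a w] wn; first by exists [::].
rewrite /simple_word /= => /andP[aS Sw] wfix wred.
have wfix' : wact w varpi = refl a varpi by rewrite -{2}wfix /= reflK.
have aa := dotp_gt0 (root_neq0 (base_sub aS)).
have a_w : dotp (wact (rev w) a) varpi = - dotp a varpi.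
  rewrite -(wact_dotp w) wactK_rev wfix' /refl dotpBr dotpZr /cpair.
  by field; rewrite gt_eqF.
have a_varpi : cpair a varpi = 0.
  apply/cpair_eq0/eqP; rewrite eq_le -oppr_ge0 -a_w.
  rewrite (base_dotp_ge0 aS) andbT nonneg_comb_dotp_ge0 //.
  exact: (reduced_inversion_root_nonneg (p := [::]) wred (erefl _)).
have [u Pu wu] := IH w wn Sw (etrans wfix' (refl_fix a_varpi)).
exists (a :: u); first by rewrite /parabolic_word /= aS a_varpi eqxx.
by move=> v /=; rewrite wu.
Qed.

Lemma cpair_wact_integral q b : simple_word S q -> b \in S ->
  exists z : int, cpair b (wact q varpi) = z%:~R.
Proof.
elim: q b => [|a q IH] b /=; first by move=> _; exact: varpi_integral.
move=> /andP[aS Sq] bS.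
have [[z1 e1] [z2 e2]] := (IH b Sq bS, IH a Sq aS).
case: Phi_root_system => _ [_ /(_ b a (base_sub bS) (base_sub aS)) [z3 e3] _].
by exists (z1 - z2 * z3); rewrite /refl cpairBr cpairZr e1 e2 e3 rmorphB rmorphM.
Qed.

Lemma min_coset_inversion_root g p a q :
  reduced_word S g -> min_coset_word S varpi g -> g = p ++ a :: q ->
  [/\ wact (rev q) a \in Phi, 0 < dotp (wact (rev q) a) varpi &
      exists z : int, cpair (wact (rev q) a) varpi = z%:~R].
Proof.
move=> gred gmin gE; have [Sg _] := gred.
move: (Sg); rewrite gE /simple_word all_cat /= => /and3P[Sp aS Sq].
set e := wact (rev q) a.
have ePhi : e \in Phi.
  by apply: wact_root; [rewrite /simple_word all_rev | exact: base_sub].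
have se : forall v, wact (rev q ++ a :: q) v = refl e v.
  by move=> v; rewrite wact_cat /= refl_wact revK.
split=> //; last first.
  have [z ez] := cpair_wact_integral Sq aS.
  by exists z; rewrite -(wact_cpair q) wactK_rev.
have e_nonneg : nonneg_comb S e := reduced_inversion_root_nonneg gred gE.
rewrite lt_def (nonneg_comb_dotp_ge0 e_nonneg) andbT; apply/eqP => /cpair_eq0 e_varpi.
have [|u Pu seu] := stabilizer_parabolic (leqnn _) _ (etrans (se _) (refl_fix e_varpi)).
  by rewrite /simple_word all_cat /= all_rev aS Sq.
have : (size g <= size (p ++ q))%N.
  apply: (gmin u) => //; first by rewrite /simple_word all_cat Sp Sq.
  move=> v; rewrite [RHS]wact_cat -seu se gE !wact_cat /= /e refl_wact revK.
  by rewrite wactK_rev reflK.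
by rewrite gE !size_cat /=; lia.
Qed.

Section MinusculeWeight.
Hypothesis varpi_minuscule : minuscule Phi S varpi.

Lemma dotp_gt0_positive_root a : a \in Phi -> 0 < dotp a varpi -> positive_root Phi S a.
Proof.
move=> aPhi a_pos; split => //.
case: S_base => _ _ _ /(_ a aPhi) [//|/nonneg_comb_dotp_ge0].
by rewrite dotpNl oppr_ge0 leNgt a_pos.
Qed.

Lemma minuscule_cpair_eq1 a : a \in Phi -> 0 < dotp a varpi ->
  (exists z : int, cpair a varpi = z%:~R) -> cpair a varpi = 1.
Proof.
move=> aPhi a_pos [z az].
have := varpi_minuscule (dotp_gt0_positive_root aPhi a_pos).
have := cpair_gt0 (root_neq0 aPhi) a_pos.
by rewrite az ltr0z lerz1 => z_gt0 z_le1; have -> : z = 1 by lia.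
Qed.

Lemma minuscule_cpair_ge0 x y : x \in Phi -> y \in Phi ->
  0 < dotp x varpi -> cpair y varpi = 1 -> 0 <= cpair x y.
Proof.
move=> xPhi yPhi x_pos y1.
have xx := dotp_gt0 (root_neq0 xPhi); have yy := dotp_gt0 (root_neq0 yPhi).
rewrite /cpair; have [xy_ge0|xy_lt0] := leP 0 (dotp x y).
  by rewrite divr_ge0 ?mulr_ge0 // ltW.
have c_lt0 : cpair x y < 0 by rewrite /cpair ltr_pdivrMr // mul0r pmulr_rlt0.
set r := refl x y.
have r_varpi : dotp r varpi = dotp y varpi - cpair x y * dotp x varpi.
  by rewrite /r /refl dotpBl dotpZl.
have y_varpi : dotp y varpi = dotp y y / 2 by rewrite dotp_cpair ?root_neq0 // y1 mul1r.
have cx_lt0 : cpair x y * dotp x varpi < 0 by rewrite pmulr_llt0.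
have r_pos : 0 < dotp r varpi by rewrite r_varpi y_varpi; lra.
have : cpair r varpi <= 1.
  by apply: varpi_minuscule; apply: dotp_gt0_positive_root; rewrite ?refl_root.
rewrite /cpair refl_dotp ler_pdivrMr // mul1r r_varpi y_varpi; lra.
Qed.

Lemma min_coset_inversion_root_minuscule g p a q :
  reduced_word S g -> min_coset_word S varpi g -> g = p ++ a :: q ->
  [/\ wact (rev q) a \in Phi, 0 < dotp (wact (rev q) a) varpi &
      cpair (wact (rev q) a) varpi = 1].
Proof.
move=> gred gmin gE; have [ePhi e_pos e_int] := min_coset_inversion_root gred gmin gE.
by split; last exact: minuscule_cpair_eq1.
Qed.

End MinusculeWeight.
End DominantWeight.

End RootSystem.
End Euclidean.

Theorem mainTheorem3 (R : realFieldType) (d : nat) (Phi S : seq 'rV[R]_d)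
  (delta varpi : 'rV[R]_d) (w0 g : seq 'rV[R]_d) :
  is_root_system Phi -> is_base Phi S ->
  delta \in S -> fund_weight S delta varpi -> minuscule Phi S varpi ->
  longest_word S w0 ->
  reduced_word S g -> min_coset_word S varpi g ->
  forall i j, (i < size g)%N -> (j < size g)%N ->
    0 <= cpair (alphas w0 g)`_i (alphas w0 g)`_j.
Proof.
(* The pairing is invariant under every word, so w0 need not be longest. *)
move=> rs bs _ fw mn _ gred gmin i j ig jg.
have dom b : b \in S -> 0 <= cpair b varpi by move/fw ->; rewrite ler0n.
have integral b : b \in S -> exists z : int, cpair b varpi = z%:~R.
  by move/fw ->; exists (b == delta)%:Z.
have gE k : (k < size g)%N -> g = take k g ++ g`_k :: drop k.+1 g.
  by move=> kg; rewrite -(drop_nth 0 kg) cat_take_drop.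
rewrite !nth_alphas // wact_cpair.
have eta := min_coset_inversion_root_minuscule rs bs dom integral mn gred gmin.
have [[xPhi x_pos _] [yPhi _ y1]] := (eta _ _ _ (gE i ig), eta _ _ _ (gE j jg)).
exact: (minuscule_cpair_ge0 rs bs dom mn xPhi yPhi x_pos y1).
Qed.
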